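(* Let $p$ be an odd prime, $\mathfrak{g}$ a finite nilpotent Lie ring of $p$-power order, $f\in\mathfrak{g}^*$, and $\mathfrak{p}_1,\mathfrak{p}_2$ polarizations of $f$. Then there exists a chain of polarizations $\mathfrak{p}_1=\mathfrak{q}_1,\mathfrak{q}_2,\ldots,\mathfrak{q}_m=\mathfrak{p}_2$ of $f$ such that $\mathfrak{q}_i$ and $\mathfrak{q}_{i+1}$ are neighbors for every $i<m$.
   Context: A Lie ring is an abelian group with a biadditive bracket satisfying the Jacobi identity and $[x,x]=0$. $\mathfrak{g}^*=\mathrm{Hom}(\mathfrak{g},\mathbb{C}^\times)$. A polarization of $f$ is a Lie subring $\mathfrak{p}\subseteq\mathfrak{g}$ with $f([\mathfrak{p},\mathfrak{p}])=\{1\}$ that is maximal among all additive subgroups of $\mathfrak{g}$ with this property. Two polarizations $\mathfrak{p}_1,\mathfrak{p}_2$ of $f$ are neighbors if $[\mathfrak{p}_1,\mathfrak{p}_2]\subseteq\mathfrak{p}_1\cap\mathfrak{p}_2$. *)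

From mathcomp Require Import all_boot all_order all_algebra all_field.
Set Implicit Arguments. Unset Strict Implicit. Unset Printing Implicit Defensive.
Import GRing.Theory.
Local Open Scope ring_scope.

Definition lie_bracket (T : zmodType) (br : T -> T -> T) : Prop :=
  [/\ (forall x y z, br (x + y) z = br x z + br y z),
      (forall x y z, br x (y + z) = br x y + br x z),
      (forall x, br x x = 0) &
      (forall x y z, br x (br y z) + br y (br z x) + br z (br x y) = 0)].

Definition addsubgroup (T : finZmodType) (A : {set T}) : bool :=
  (0 \in A) && [forall x in A, forall y in A, x - y \in A].

Definition lie_subring (T : finZmodType) (br : T -> T -> T) (A : {set T}) : bool :=
  addsubgroup A && [forall x in A, forall y in A, br x y \in A].

Definition addgen (T : finZmodType) (A : {set T}) : {set T} :=
  [set x | [forall H : {set T}, (addsubgroup H && (A \subset H)) ==> (x \in H)]].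

(* lower central series: g^1 = g, g^{k+1} = <[g, g^k]> (indexed from 0 here) *)
Fixpoint lcs (T : finZmodType) (br : T -> T -> T) (k : nat) : {set T} :=
  match k with
  | 0 => [set: T]
  | k'.+1 => addgen [set br x y | x in [set: T], y in lcs br k']
  end.

Definition lie_nilpotent (T : finZmodType) (br : T -> T -> T) : Prop :=
  exists k, lcs br k = [set 0].

(* f in g^* = Hom(g, C^x); values taken in algC (the algebraic complex numbers),
   which contain all roots of unity, hence all values of such f on a finite group. *)
Definition dual_elt (T : zmodType) (f : T -> algC) : Prop :=
  (forall x y, f (x + y) = f x * f y) /\ (forall x, f x != 0).

(* f([A, A]) = {1}: f is trivial on all brackets of elements of A
   (equivalently on the additive subgroup they generate, f being additive). *)
Definition isotropic (T : finZmodType) (br : T -> T -> T) (f : T -> algC) (A : {set T}) : Prop :=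
  forall x y, x \in A -> y \in A -> f (br x y) = 1.

Definition polarization (T : finZmodType) (br : T -> T -> T) (f : T -> algC) (P : {set T}) : Prop :=
  [/\ lie_subring br P, isotropic br f P &
      forall S : {set T}, addsubgroup S -> P \subset S -> isotropic br f S -> S = P].

Definition neighbors (T : finZmodType) (br : T -> T -> T) (P1 P2 : {set T}) : Prop :=
  forall x y, x \in P1 -> y \in P2 -> br x y \in P1 :&: P2.

From mathcomp Require Import all_boot all_order all_algebra all_fingroup all_field.
From mathcomp Require Import cyclic.
Set Implicit Arguments. Unset Strict Implicit. Unset Printing Implicit Defensive.
Import GRing.Theory.
Local Open Scope ring_scope.

(* Induction on the Lie subring [G] on which polarizations are taken.  If [G]
   is not isotropic, nilpotency and the p-power order provide [y] in [G],
   outside the radical of [f] on [G], such that [[G, y]] lies in the radical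
   and [f([G, y])] consists of p-th roots of unity.  Then
   [g0 = {x in G | f([x, y]) = 1}] is a proper Lie subring whose
   polarizations are polarizations of [G], and every polarization [P] of [G]
   has a neighbor in [g0], namely [(P cap g0) + Z y]. *)

Section LieBracket.
Variables (T : zmodType) (br : T -> T -> T).
Hypothesis lieT : lie_bracket br.

Lemma brDl x y z : br (x + y) z = br x z + br y z. Proof. by case: lieT. Qed.
Lemma brDr x y z : br x (y + z) = br x y + br x z. Proof. by case: lieT. Qed.
Lemma brxx x : br x x = 0. Proof. by case: lieT. Qed.

Lemma br0l z : br 0 z = 0.
Proof. by apply: (addrI (br 0 z)); rewrite -brDl !addr0. Qed.

Lemma br0r z : br z 0 = 0.
Proof. by apply: (addrI (br z 0)); rewrite -brDr !addr0. Qed.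

Lemma brNl x z : br (- x) z = - br x z.
Proof. by apply/eqP; rewrite -addr_eq0 -brDl addNr br0l. Qed.

Lemma brNr x z : br z (- x) = - br z x.
Proof. by apply/eqP; rewrite -addr_eq0 -brDr addNr br0r. Qed.

Lemma brBl x y z : br (x - y) z = br x z - br y z.
Proof. by rewrite brDl brNl. Qed.

Lemma brBr x y z : br z (x - y) = br z x - br z y.
Proof. by rewrite brDr brNr. Qed.

Lemma brMnl x z n : br (x *+ n) z = br x z *+ n.
Proof. by elim: n => [|n IHn]; rewrite ?mulr0n ?br0l // !mulrS brDl IHn. Qed.

Lemma brMnr x z n : br z (x *+ n) = br z x *+ n.
Proof. by elim: n => [|n IHn]; rewrite ?mulr0n ?br0r // !mulrS brDr IHn. Qed.

Lemma br_anti x y : br x y = - br y x.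
Proof.
apply/eqP; rewrite -addr_eq0; have := brxx (x + y).
by rewrite brDl !brDr !brxx add0r addr0 => ->.
Qed.

Lemma br_jacobi x y z : br (br x y) z = br x (br y z) + br y (br z x).
Proof.
rewrite br_anti; apply/eqP; rewrite eq_sym -subr_eq0 opprK.
by case: lieT => _ _ _ ->.
Qed.

End LieBracket.

Section DualElement.
Variables (T : zmodType) (f : T -> algC).
Hypothesis dualf : dual_elt f.

Lemma dualD x y : f (x + y) = f x * f y. Proof. by case: dualf. Qed.
Lemma dual_neq0 x : f x != 0. Proof. by case: dualf. Qed.

Lemma dual0 : f 0 = 1.
Proof. by apply: (mulfI (dual_neq0 0)); rewrite -dualD !addr0 mulr1. Qed.

Lemma dualN x : f (- x) = (f x)^-1.
Proof.
by apply: (mulfI (dual_neq0 x)); rewrite -dualD subrr dual0 divff ?dual_neq0.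
Qed.

Lemma dualB x y : f (x - y) = f x / f y.
Proof. by rewrite dualD dualN. Qed.

Lemma dualMn x n : f (x *+ n) = f x ^+ n.
Proof. by elim: n => [|n IHn]; rewrite ?dual0 // mulrS exprS dualD IHn. Qed.

End DualElement.

Lemma prime_root_primitive (R : idomainType) p (z : R) :
  prime p -> z ^+ p = 1 -> z != 1 -> p.-primitive_root z.
Proof.
move=> prime_p zp z_neq1.
have [m prim_z /(primeP prime_p).2/orP[/eqP m1|/eqP <- //]] :=
  prim_order_exists (prime_gt0 prime_p) zp.
by move: (prim_expr_order prim_z); rewrite m1 expr1 => z1; rewrite z1 eqxx in z_neq1.
Qed.

Lemma mulrn_card (T : finZmodType) (x : T) : x *+ #|T| = 0.
Proof.
rewrite -FinRing.zmodXgE -cardsT.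
exact: (@expg_cardG T [set: T]%G x (in_setT x)).
Qed.

Section AdditiveSubgroups.
Variable T : finZmodType.
Implicit Types A H : {set T}.

Lemma addsubgroupP A :
  reflect (0 \in A /\ {in A &, forall x y, x - y \in A}) (addsubgroup A).
Proof.
apply: (iffP andP) => -[A0 HA]; split=> //.
  by move=> x y xA yA; move/forall_inP: HA => /(_ x xA)/forall_inP/(_ y yA).
by apply/forall_inP=> x xA; apply/forall_inP=> y yA; apply: HA.
Qed.

Section Closure.
Variable A : {set T}.
Hypothesis sgA : addsubgroup A.

Lemma addsubgroup0 : 0 \in A.
Proof. by case/addsubgroupP: sgA. Qed.

Lemma addsubgroupB x y : x \in A -> y \in A -> x - y \in A.
Proof. by case/addsubgroupP: sgA => _; apply. Qed.

Lemma addsubgroupN x : x \in A -> - x \in A.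
Proof. by move=> xA; rewrite -sub0r addsubgroupB ?addsubgroup0. Qed.

Lemma addsubgroupD x y : x \in A -> y \in A -> x + y \in A.
Proof. by move=> xA yA; rewrite -[y]opprK addsubgroupB ?addsubgroupN. Qed.

Lemma addsubgroupMn x n : x \in A -> x *+ n \in A.
Proof.
by move=> xA; elim: n => [|n IHn]; rewrite ?mulr0n ?addsubgroup0 // mulrS addsubgroupD.
Qed.

End Closure.

Lemma addsubgroupT : addsubgroup [set: T].
Proof. by apply/addsubgroupP; split=> [|x y _ _]; rewrite in_setT. Qed.

Lemma addgen_addsubgroup A : addsubgroup (addgen A).
Proof.
apply/addsubgroupP; split=> [|x y]; rewrite !inE.
  by apply/forallP=> H; apply/implyP=> /andP[sgH _]; apply: addsubgroup0.
move=> /forallP Hx /forallP Hy; apply/forallP=> H; apply/implyP=> HH.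
move: (implyP (Hx H) HH) (implyP (Hy H) HH); case/andP: HH => sgH _.
exact: addsubgroupB.
Qed.

Lemma subset_addgen A : A \subset addgen A.
Proof.
apply/subsetP=> x xA; rewrite inE; apply/forallP=> H.
by apply/implyP=> /andP[_ /subsetP]; apply.
Qed.

Lemma addgen_subG A H : addsubgroup H -> A \subset H -> addgen A \subset H.
Proof.
by move=> sgH sAH; apply/subsetP=> x; rewrite inE => /forallP/(_ H); rewrite sgH sAH.
Qed.

Lemma addgen_ind A (P : pred T) :
  P 0 -> (forall x y, P x -> P y -> P (x - y)) -> {subset A <= P} ->
  {subset addgen A <= P}.
Proof.
move=> P0 PB sAP; have: addgen A \subset [set x | P x].
  apply: addgen_subG; last by apply/subsetP=> x /sAP; rewrite inE.
  by apply/addsubgroupP; split=> [|x y]; rewrite !inE //; apply: PB.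
by move/subsetP=> sAgP x /sAgP; rewrite inE.
Qed.

Variable br : T -> T -> T.

Lemma lie_subringP A :
  reflect (addsubgroup A /\ {in A &, forall x y, br x y \in A}) (lie_subring br A).
Proof.
apply: (iffP andP) => -[sgA HA]; split=> //.
  by move=> x y xA yA; move/forall_inP: HA => /(_ x xA)/forall_inP/(_ y yA).
by apply/forall_inP=> x xA; apply/forall_inP=> y yA; apply: HA.
Qed.

Lemma lie_subringT : lie_subring br [set: T].
Proof. by apply/lie_subringP; split=> [|x y _ _]; rewrite ?addsubgroupT ?in_setT. Qed.

End AdditiveSubgroups.

Section Polarizations.
Variables (T : finZmodType) (br : T -> T -> T) (f : T -> algC).
Hypotheses (lieT : lie_bracket br) (dualf : dual_elt f).
Implicit Types A G P Q S : {set T}.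

Lemma dual_brC x y : f (br x y) = 1 -> f (br y x) = 1.
Proof. by move=> fxy; rewrite br_anti // dualN // fxy invr1. Qed.

Lemma dual_brxx x : f (br x x) = 1.
Proof. by rewrite brxx // dual0. Qed.

Lemma orth_addgen A z :
  {in A, forall x, f (br x z) = 1} -> {in addgen A, forall x, f (br x z) = 1}.
Proof.
move=> orthA x /(addgen_ind (P := [pred x | f (br x z) == 1])) /eqP; apply.
- by rewrite /= br0l // dual0.
- by move=> a b /eqP fa /eqP fb; rewrite /= brBl // dualB // fa fb divr1.
- by move=> a /orthA; rewrite inE => ->.
Qed.

Lemma isotropic_addgen A : isotropic br f A -> isotropic br f (addgen A).
Proof.
move=> isoA x y xA yA; apply: dual_brC; move: y yA; apply: orth_addgen => a aA.
by apply: dual_brC; move: x xA; apply: orth_addgen => b bA; apply: isoA.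
Qed.

Lemma isotropicU1 A u :
  isotropic br f A -> {in A, forall x, f (br x u) = 1} ->
  isotropic br f (A :|: [set u]).
Proof.
move=> isoA orthA x y; rewrite !inE => /orP[xA|/eqP->] /orP[yA|/eqP->].
- exact: isoA.
- exact: orthA.
- exact/dual_brC/orthA.
- exact: dual_brxx.
Qed.

Definition polarization_in G P : Prop :=
  [/\ P \subset G, lie_subring br P, isotropic br f P &
      forall S, addsubgroup S -> P \subset S -> S \subset G -> isotropic br f S ->
        S = P].

Lemma polarization_in_addsubgroup G P : polarization_in G P -> addsubgroup P.
Proof. by case=> _ /lie_subringP[]. Qed.

Lemma polarization_inT P : polarization br f P -> polarization_in [set: T] P.
Proof.
by case=> PR isoP maxP; split=> // S sgS PS _; apply: maxP.
Qed.

Lemma polarization_Tin P : polarization_in [set: T] P -> polarization br f P.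
Proof. by case=> _ PR isoP maxP; split=> // S sgS PS; apply: maxP; rewrite ?subsetT. Qed.

Lemma polarization_in_isotropic G P :
  addsubgroup G -> isotropic br f G -> polarization_in G P -> P = G.
Proof. by move=> sgG isoG [PG _ _ maxP]; rewrite (maxP G). Qed.

Lemma polarization_in_orth G P u :
  addsubgroup G -> polarization_in G P -> u \in G ->
  {in P, forall x, f (br x u) = 1} -> u \in P.
Proof.
move=> sgG [PG _ isoP maxP] uG orthP.
have sPu := subset_addgen (P :|: [set u]).
have <- : addgen (P :|: [set u]) = P.
  apply: maxP; first exact: addgen_addsubgroup.
  - exact: subset_trans (subsetUl _ _) sPu.
  - by apply: addgen_subG; rewrite // subUset PG sub1set.
  - exact/isotropic_addgen/isotropicU1.
by apply: (subsetP sPu); rewrite !inE eqxx orbT.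
Qed.

Definition radical G := [set c in G | [forall x in G, f (br c x) == 1]].

Lemma radicalP G c :
  reflect (c \in G /\ {in G, forall x, f (br c x) = 1}) (c \in radical G).
Proof.
rewrite inE; apply: (iffP andP) => -[cG Hc]; split=> //.
  by move=> x /(forall_inP Hc)/eqP.
by apply/forall_inP=> x /Hc ->.
Qed.

Lemma radical_addsubgroup G : addsubgroup G -> addsubgroup (radical G).
Proof.
move=> sgG; apply/addsubgroupP; split.
  by apply/radicalP; split=> [|x _]; rewrite ?addsubgroup0 ?br0l ?dual0.
move=> a b /radicalP[aG fa] /radicalP[bG fb]; apply/radicalP; split.
  exact: addsubgroupB.
by move=> x xG; rewrite brBl // dualB // fa // fb // divr1.
Qed.

Lemma radical_sub_polarization G P :
  addsubgroup G -> polarization_in G P -> radical G \subset P.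
Proof.
move=> sgG polP; have [PG _ _ _] := polP.
apply/subsetP=> c /radicalP[cG fc]; apply: polarization_in_orth cG _ => // x xP.
exact/dual_brC/fc/(subsetP PG).
Qed.

Definition orth A y := [set x in A | f (br x y) == 1].

Lemma orthP A y x : reflect (x \in A /\ f (br x y) = 1) (x \in orth A y).
Proof. by rewrite inE; apply: (iffP andP) => -[-> /eqP]. Qed.

Lemma orth_sub A y : orth A y \subset A.
Proof. by apply/subsetP=> x /orthP[]. Qed.

Lemma orth_addsubgroup A y : addsubgroup A -> addsubgroup (orth A y).
Proof.
move=> sgA; apply/addsubgroupP; split.
  by apply/orthP; rewrite addsubgroup0 ?br0l ?dual0.
move=> a b /orthP[aA fa] /orthP[bA fb]; apply/orthP.
by rewrite addsubgroupB // brBl // dualB // fa fb divr1.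
Qed.

Section NeighborInOrth.
Variables (p : nat) (G P : {set T}) (y : T).
Hypotheses (prime_p : prime p) (GR : lie_subring br G) (polP : polarization_in G P).
Hypotheses (yG : y \in G) (br_y_rad : {in G, forall x, br x y \in radical G}).
Hypothesis dual_br_y_p : {in G, forall x, f (br x y) ^+ p = 1}.

Let K := orth P y.
Let Q := addgen (K :|: [set y]).

Let sgG : addsubgroup G. Proof. by case/lie_subringP: GR. Qed.
Let PG : {subset P <= G}. Proof. by case: polP => /subsetP. Qed.
Let PR : lie_subring br P. Proof. by case: polP. Qed.
Let isoP : isotropic br f P. Proof. by case: polP. Qed.
Let sgP : addsubgroup P. Proof. exact: polarization_in_addsubgroup polP. Qed.
Let sgK : addsubgroup K. Proof. exact: orth_addsubgroup. Qed.
Let sgQ : addsubgroup Q. Proof. exact: addgen_addsubgroup. Qed.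
Let radP : {subset radical G <= P}.
Proof. exact/subsetP/radical_sub_polarization. Qed.
Let KP : {subset K <= P}. Proof. exact/subsetP/orth_sub. Qed.
Let KQ : {subset K <= Q}.
Proof. by apply/subsetP; apply: subset_trans (subsetUl _ _) (subset_addgen _). Qed.
Let yQ : y \in Q.
Proof. by apply: (subsetP (subset_addgen _)); rewrite !inE eqxx orbT. Qed.

Let brGy_K : {in G, forall x, br x y \in K}.
Proof.
move=> x /br_y_rad rad_xy; apply/orthP; split; first exact: radP.
by case/radicalP: rad_xy => _ /(_ y yG).
Qed.

Let brPK_K : {in P & K, forall x k, br x k \in K}.
Proof.
move=> x k xP /orthP[kP _]; apply/orthP; split; first by case/lie_subringP: PR => _; apply.
have ky_P : br k y \in P by apply/radP/br_y_rad/PG.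
have yx_P : br y x \in P by rewrite br_anti // addsubgroupN //; apply/radP/br_y_rad/PG.
by rewrite br_jacobi // dualD // !isoP // mul1r.
Qed.

Let Q_sub_orth : Q \subset orth G y.
Proof.
apply: addgen_subG; first exact: orth_addsubgroup.
rewrite subUset sub1set; apply/andP; split; last by apply/orthP; rewrite dual_brxx.
by apply/subsetP=> x /orthP[xP fx]; apply/orthP; rewrite PG.
Qed.

Let isoQ : isotropic br f Q.
Proof.
apply/isotropic_addgen/isotropicU1 => [x z /KP xP /KP zP|x /orthP[]//].
exact: isoP.
Qed.

Let brPQ_K : {in P & Q, forall x q, br x q \in K}.
Proof.
move=> x q xP; apply: (addgen_ind (P := [pred q | br x q \in K])) => [|a b|a].
- by rewrite /= br0r // addsubgroup0.
- by rewrite /= brBr //; apply: addsubgroupB.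
rewrite in_setU in_set1 => /orP[aK|/eqP->]; rewrite unfold_in /=.
  exact: brPK_K.
exact/brGy_K/PG.
Qed.

Let QR : lie_subring br Q.
Proof.
apply/lie_subringP; split=> // a b aQ bQ; move: a aQ.
apply: (addgen_ind (P := [pred a | br a b \in Q])) => [|a c|a].
- by rewrite /= br0l // addsubgroup0.
- by rewrite /= brBl //; apply: addsubgroupB.
rewrite in_setU in_set1 => /orP[aK|/eqP->]; rewrite unfold_in /=.
  exact/KQ/brPQ_K/bQ/KP.
have /orthP[bG _] := subsetP Q_sub_orth b bQ.
by rewrite br_anti // addsubgroupN // KQ // brGy_K.
Qed.

Let Q_maximal S :
  y \notin P -> addsubgroup S -> Q \subset S -> S \subset G -> isotropic br f S ->
  S \subset Q.
Proof.
move=> yP sgS /subsetP QS /subsetP SG isoS; apply/subsetP=> s sS.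
have /forall_inPn[x0 x0P fx0] : ~~ [forall x in P, f (br x y) == 1].
  apply: contra yP => /forall_inP orthPy.
  by apply: polarization_in_orth yG _ => // x /orthPy/eqP.
set z := f (br x0 y) in fx0.
have prim_z : p.-primitive_root z.
  exact: prime_root_primitive prime_p (dual_br_y_p (PG x0P)) fx0.
have P_mod_K x : x \in P -> exists2 j, f (br x y) = z ^+ j & x - x0 *+ j \in K.
  move=> xP; have [j fxy] := prim_rootP prim_z (dual_br_y_p (PG xP)).
  exists j => //; apply/orthP; rewrite addsubgroupB ?addsubgroupMn //.
  by rewrite brBl // brMnl // dualB // dualMn // fxy divff // expf_neq0 // dual_neq0.
have [m fx0s] : exists m : nat, f (br x0 s) = z ^+ m.
  suff /(prim_rootP prim_z)[m ->] : f (br x0 s) ^+ p = 1 by exists m.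
  rewrite -dualMn // -brMnl //; apply: isoS sS; apply/QS/KQ/orthP.
  by rewrite addsubgroupMn // brMnl // dualMn // dual_br_y_p // PG.
(* With this [m], [u] is orthogonal to [x0] and to [K], hence to [P = K + Z x0]. *)
pose u := s - y *+ m.
have uP : u \in P.
  apply: (@polarization_in_orth G) => //.
    by rewrite /u addsubgroupB ?addsubgroupMn ?(SG s sS).
  move=> x xP; have [j fxy xK] := P_mod_K x xP.
  rewrite brBr // brMnr // dualB // dualMn // fxy -(subrK (x0 *+ j) x) brDl //.
  rewrite dualD // isoS ?(QS _ (KQ xK)) // mul1r brMnl // dualMn // fx0s -!exprM mulnC.
  by rewrite divff // expf_neq0 // dual_neq0.
have uK : u \in K.
  apply/orthP; split=> //; rewrite brBl // brMnl // dualB // dualMn // dual_brxx.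
  by rewrite expr1n divr1 isoS ?(QS _ yQ).
by rewrite -(subrK (y *+ m) s) addsubgroupD ?addsubgroupMn ?(KQ uK).
Qed.

Lemma exists_neighbor_in_orth :
  exists Q, [/\ polarization_in G Q, neighbors br P Q & Q \subset orth G y].
Proof.
have [yP | yP] := boolP (y \in P).
  exists P; split=> //.
    by move=> a b aP bP; rewrite setIid; case/lie_subringP: PR => _; apply.
  by apply/subsetP=> x xP; apply/orthP; rewrite (PG xP) isoP.
exists Q; split=> //.
  split=> //; first exact: subset_trans Q_sub_orth (orth_sub _ _).
  move=> S sgS QS SG isoS; apply/eqP; rewrite eqEsubset QS andbT.
  exact: Q_maximal.
by move=> x q xP qQ; have xqK := brPQ_K xP qQ; rewrite inE (KP xqK) (KQ xqK).
Qed.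

End NeighborInOrth.

Section OrthSubring.
Variables (G : {set T}) (y : T).
Hypotheses (GR : lie_subring br G) (yG : y \in G).
Hypothesis br_y_rad : {in G, forall x, br x y \in radical G}.

Let sgG : addsubgroup G. Proof. by case/lie_subringP: GR. Qed.

Lemma orth_lie_subring : lie_subring br (orth G y).
Proof.
apply/lie_subringP; split=> [|a b /orthP[aG _] /orthP[bG _]].
  exact: orth_addsubgroup.
apply/orthP; split; first by case/lie_subringP: GR => _; apply.
have /radicalP[_ rad_by] := br_y_rad bG.
have /radicalP[_ rad_ya] : br y a \in radical G.
  by rewrite br_anti // addsubgroupN ?radical_addsubgroup ?br_y_rad.
have f1 : f (br a (br b y)) = 1 by apply/dual_brC/rad_by.
have f2 : f (br b (br y a)) = 1 by apply/dual_brC/rad_ya.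
by rewrite br_jacobi // dualD // f1 f2 mulr1.
Qed.

Lemma orth_proper : y \notin radical G -> orth G y \proper G.
Proof.
move=> yr; rewrite properE orth_sub /=.
have /forall_inPn[x xG fyx] : ~~ [forall x in G, f (br y x) == 1].
  by apply: contra yr => /forall_inP orthGy; apply/radicalP; split=> // x /orthGy/eqP.
by apply/subsetPn; exists x => //; apply: contra fyx => /orthP[_ /dual_brC ->].
Qed.

Lemma polarization_in_orthW X :
  polarization_in (orth G y) X -> polarization_in G X.
Proof.
move=> polX; have [XO XR isoX maxX] := polX.
have yX : y \in X.
  apply: polarization_in_orth (orth_addsubgroup y sgG) polX _ _.
    by apply/orthP; rewrite yG dual_brxx.
  by move=> x /(subsetP XO)/orthP[].
split=> //; first exact: subset_trans XO (orth_sub _ _).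
move=> S sgS XS SG isoS; apply: maxX => //.
apply/subsetP=> s sS; apply/orthP; split; first exact: (subsetP SG).
exact: isoS (subsetP XS y yX).
Qed.

End OrthSubring.

Lemma polarization_in_orthS G y Q :
  polarization_in G Q -> Q \subset orth G y -> polarization_in (orth G y) Q.
Proof.
case=> _ QR isoQ maxQ QO; split=> // S sgS QS SO isoS.
by apply: maxQ => //; apply: subset_trans SO (orth_sub _ _).
Qed.

Lemma exists_br_radical G :
  lie_subring br G -> lie_nilpotent br -> ~~ (G \subset radical G) ->
  exists y, [/\ y \in G, y \notin radical G & {in G, forall x, br x y \in radical G}].
Proof.
move=> GR [k lcs_k] Gnrad; have sgG : addsubgroup G by case/lie_subringP: GR.
have ex_rad : exists k, lcs br k :&: G \subset radical G.
  exists k; rewrite lcs_k; apply/subsetP=> x; rewrite in_setI in_set1 => /andP[/eqP-> _].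
  exact/addsubgroup0/radical_addsubgroup.
case: (ex_minnP ex_rad) => -[|m]; first by rewrite setTI (negPf Gnrad).
move=> lcs_rad min_m.
have /subsetPn[y /setIP[y_lcs yG] yr] : ~~ (lcs br m :&: G \subset radical G).
  by apply/negP=> /min_m; rewrite ltnn.
exists y; split=> // x xG; apply: (subsetP lcs_rad); apply/setIP; split.
  by apply: (subsetP (subset_addgen _)); apply/imset2P; exists x y; rewrite ?in_setT.
by case/lie_subringP: GR => _; apply.
Qed.

Lemma exists_br_radical_root p G :
  (exists n, #|T| = (p ^ n)%N) -> lie_subring br G -> lie_nilpotent br ->
  ~~ (G \subset radical G) ->
  exists y, [/\ y \in G, y \notin radical G, {in G, forall x, br x y \in radical G} &
                {in G, forall x, f (br x y) ^+ p = 1}].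
Proof.
move=> [n cardT] GR nilT Gnrad; have sgG : addsubgroup G by case/lie_subringP: GR.
have sgR := radical_addsubgroup sgG.
have [y0 [y0G y0r br_y0]] := exists_br_radical GR nilT Gnrad.
have ex_j : exists j, y0 *+ (p ^ j) \in radical G.
  by exists n; rewrite -cardT mulrn_card addsubgroup0.
case: (ex_minnP ex_j) => -[|j]; first by rewrite expn0 mulr1n (negPf y0r).
move=> y_p min_j; exists (y0 *+ p ^ j); split.
- exact: addsubgroupMn.
- by apply/negP=> /min_j; rewrite ltnn.
- by move=> x xG; rewrite brMnr // addsubgroupMn // br_y0.
move=> x xG; rewrite -dualMn // -brMnr // -mulrnA -expnSr; apply/dual_brC.
by case/radicalP: y_p => _; apply.
Qed.

Lemma neighbors_sym P Q :
  addsubgroup P -> addsubgroup Q -> neighbors br P Q -> neighbors br Q P.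
Proof.
move=> sgP sgQ nPQ x z xQ zP; rewrite setIC br_anti //.
have /setIP[zxP zxQ] := nPQ z x zP xQ.
by apply/setIP; split; apply: addsubgroupN.
Qed.

Inductive neighbor_chain G : {set T} -> {set T} -> Prop :=
| neighbor_chain_refl P : neighbor_chain G P P
| neighbor_chain_cons P Q R : polarization_in G P -> polarization_in G Q ->
    neighbors br P Q -> neighbor_chain G Q R -> neighbor_chain G P R.

Lemma neighbor_chain_trans G P Q R :
  neighbor_chain G P Q -> neighbor_chain G Q R -> neighbor_chain G P R.
Proof. by elim=> // P' Q' R' polP polQ nPQ _ IH /IH; apply: neighbor_chain_cons. Qed.

Lemma neighbor_chainW G0 G P Q :
  (forall X, polarization_in G0 X -> polarization_in G X) ->
  neighbor_chain G0 P Q -> neighbor_chain G P Q.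
Proof.
move=> polW; elim=> [X|P' Q' R' polP polQ nPQ _ IH]; first exact: neighbor_chain_refl.
exact: neighbor_chain_cons (polW _ polP) (polW _ polQ) nPQ IH.
Qed.

Lemma neighbor_chain_seq P Q :
  neighbor_chain [set: T] P Q ->
  exists qs : seq {set T},
    [/\ last P qs = Q, (forall q, q \in qs -> polarization br f q) &
        (forall i, (i < size qs)%N -> neighbors br (nth P (P :: qs) i) (nth P qs i))].
Proof.
elim=> [X|X Y R polX polY nXY _ [qs [last_qs pol_qs nb_qs]]]; first by exists [::].
exists (Y :: qs); split=> //.
  by move=> q; rewrite inE => /predU1P[->|/pol_qs //]; apply: polarization_Tin.
case=> [|i] //= lt_i.
rewrite (set_nth_default Y X) /= 1?ltnW // (set_nth_default Y X) //.
exact: nb_qs.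
Qed.

Lemma neighbor_chain_polarization_in p G P1 P2 :
  prime p -> (exists n, #|T| = (p ^ n)%N) -> lie_nilpotent br -> lie_subring br G ->
  polarization_in G P1 -> polarization_in G P2 -> neighbor_chain G P1 P2.
Proof.
move=> prime_p pgroupT nilT; move: {2}#|G|.+1 (ltnSn #|G|) => N.
elim: N G P1 P2 => // N IHN G P1 P2 ltGN GR polP1 polP2.
have sgG : addsubgroup G by case/lie_subringP: GR.
have [Grad | Gnrad] := boolP (G \subset radical G).
  have isoG : isotropic br f G.
    by move=> x z /(subsetP Grad)/radicalP[_ fx] zG; apply: fx.
  rewrite (polarization_in_isotropic sgG isoG polP1).
  rewrite (polarization_in_isotropic sgG isoG polP2).
  exact: neighbor_chain_refl.
have [y [yG yr br_y_rad dual_br_y_p]] := exists_br_radical_root pgroupT GR nilT Gnrad.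
have [Q1 [polQ1 nPQ1 Q1_orth]] :=
  exists_neighbor_in_orth prime_p GR polP1 yG br_y_rad dual_br_y_p.
have [Q2 [polQ2 nPQ2 Q2_orth]] :=
  exists_neighbor_in_orth prime_p GR polP2 yG br_y_rad dual_br_y_p.
have chainQ : neighbor_chain (orth G y) Q1 Q2.
  apply: IHN (orth_lie_subring GR br_y_rad) (polarization_in_orthS polQ1 Q1_orth)
    (polarization_in_orthS polQ2 Q2_orth).
  by rewrite -ltnS (leq_trans _ ltGN) // ltnS proper_card // orth_proper.
apply: neighbor_chain_cons polP1 polQ1 nPQ1 _.
apply: neighbor_chain_trans (neighbor_chainW (polarization_in_orthW GR yG) chainQ) _.
apply: neighbor_chain_cons (neighbor_chain_refl _ _) => //.
exact: neighbors_sym (polarization_in_addsubgroup polP2)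
  (polarization_in_addsubgroup polQ2) nPQ2.
Qed.

End Polarizations.

Theorem lemma2p6 (p : nat) (T : finZmodType) (br : T -> T -> T) (f : T -> algC)
    (P1 P2 : {set T}) :
  prime p -> odd p -> (exists n, #|T| = (p ^ n)%N) ->
  lie_bracket br -> lie_nilpotent br -> dual_elt f ->
  polarization br f P1 -> polarization br f P2 ->
  exists qs : seq {set T},
    [/\ last P1 qs = P2,
        (forall q, q \in qs -> polarization br f q) &
        (forall i, (i < size qs)%N -> neighbors br (nth P1 (P1 :: qs) i) (nth P1 qs i))].
Proof.
move=> prime_p _ pgroupT lieT nilT dualf polP1 polP2.
apply: neighbor_chain_seq.
exact: (neighbor_chain_polarization_in lieT dualf prime_p pgroupT nilT (lie_subringT br)
  (polarization_inT polP1) (polarization_inT polP2)).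
Qed.
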